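(* Consider an implication of canonical form $(\ast)$ and an environment $\eta$. Suppose there is a subset $B\subseteq V$ such that (B1) $\sum_{c\in B}\Pi(i)(c)\le1$ for all $1\le i\le M$; (B2) for every $1\le j\le N$, either $\sum_{c\in V}\Omega(j)(c)=0$ or $\sum_{c\in B}\Omega(j)(c)=1$; (B3) for all $1\le i\le M$, $1\le j\le N$ with $\Pi(i)\not\ge\Omega(j)$ there is $c\in B$ with $\Pi(i)(c)<\Omega(j)(c)$. If the implication is unary $\eta$-valid, then the Parametricity Condition holds for it and $\eta$.
   Context: $\mathsf{Heap}$: finite partial functions $\mathsf{PosInt}\to\mathsf{Int}$; $g\sqsubseteq h$ means $h$ extends $g$; $h\cdot g$ union of disjoint heaps; componentwise on $\mathsf{Heap}^n$. $\mathsf{IRel}_n$: upward closed subsets of $\mathsf{Heap}^n$; $p*q=\{\mathbf f\cdot\mathbf g\mid\mathbf f\in p,\mathbf g\in q,\text{componentwise disjoint}\}$; $\Delta_n(X)=\{(h_1,\dots,h_n)\mid\exists f\in X.\ \forall k.\ f\sqsubseteq h_k\}$. Assertions: built from primitive assertions $P$, assertion variables, $\mathsf{true},\mathsf{false},\wedge,\vee,*$, quantifiers over integer variables. $n$-ary meaning under $\eta$ and $\rho:\mathsf{AVar}\to\mathsf{IRel}_n$: $[\![P]\!]^n=\Delta_n([\![P]\!]^{\mathrm{prim}}_\eta)$, $[\![a]\!]^n=\rho(a)$, connectives by $\mathsf{Heap}^n,\emptyset,\cap,\cup,*$, quantifiers by unions/intersections. $n$-ary $\eta$-validity of $\varphi\Rightarrow\psi$: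 $[\![\varphi]\!]^n_{\eta,\rho}\subseteq[\![\psi]\!]^n_{\eta,\rho}$ for all $\rho:\mathsf{AVar}\to\mathsf{IRel}_n$ (unary: $n=1$). Canonical form $(\ast)$: $\bigwedge_{i=1}^M\varphi_i*a_{i,1}*\cdots*a_{i,M_i}\Rightarrow\bigvee_{j=1}^N\psi_j*b_{j,1}*\cdots*b_{j,N_j}$, $M\ge1$, $N\ge0$, $\varphi_i,\psi_j$ free of assertion variables, every $b_{j,k}$ among the $a_{i,k}$. $V=\{a_{i,k}\}$; $\Pi(i)(c)=|\{k\mid a_{i,k}=c\}|$, $\Omega(j)(c)=|\{k\mid b_{j,k}=c\}|$; $\Pi(i)\ge\Omega(j)$ iff $\Pi(i)(c)\ge\Omega(j)(c)$ for all $c\in V$. Disjunct $j$ is empty if $N_j=0$. Parametricity Condition: for all $h,h_1,\dots,h_M\in\mathsf{Heap}$ with $h_i\sqsubseteq h$ and $h_i\in[\![\varphi_i]\!]^1_\eta$ for all $i$, either (1) there are $i,j$ with $h_i\in[\![\psi_j]\!]^1_\eta$ and $\Pi(i)\ge\Omega(j)$, or (2) there is an empty disjunct $j$ with $h\in[\![\psi_j]\!]^1_\eta$. *)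

From Stdlib Require Import ZArith List PArith Arith Fin.
Import ListNotations.

Record Heap := mkHeap {
  hfun :> positive -> option Z;
  hfin : exists l : list positive, forall x, hfun x <> None -> In x l
}.

Definition hext (g h : Heap) : Prop :=
  forall x v, g x = Some v -> h x = Some v.

Definition hdisj (f g : Heap) : Prop :=
  forall x, f x = None \/ g x = None.

Definition hunion (f g h : Heap) : Prop :=
  hdisj f g /\
  forall x, h x = match f x with Some v => Some v | None => g x end.

Definition HeapN (n : nat) := Fin.t n -> Heap.

Definition hextN {n} (t t' : HeapN n) : Prop := forall k, hext (t k) (t' k).

Definition upclosed {n} (p : HeapN n -> Prop) : Prop :=
  forall t t', hextN t t' -> p t -> p t'.

Definition starN {n} (p q : HeapN n -> Prop) : HeapN n -> Prop :=
  fun t => exists f g, p f /\ q g /\ forall k, hunion (f k) (g k) (t k).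

Definition DeltaN (n : nat) (X : Heap -> Prop) : HeapN n -> Prop :=
  fun t => exists f, X f /\ forall k, hext f (t k).

(* integer variables and assertion variables are both indexed by nat *)
Inductive assertion (Prim : Type) : Type :=
| APrim : Prim -> assertion Prim
| AVar  : nat -> assertion Prim
| ATrue : assertion Prim
| AFalse : assertion Prim
| AAnd  : assertion Prim -> assertion Prim -> assertion Prim
| AOr   : assertion Prim -> assertion Prim -> assertion Prim
| AStar : assertion Prim -> assertion Prim -> assertion Prim
| AEx   : nat -> assertion Prim -> assertion Prim
| AAll  : nat -> assertion Prim -> assertion Prim.

Arguments APrim {Prim}. Arguments AVar {Prim}. Arguments ATrue {Prim}.
Arguments AFalse {Prim}. Arguments AAnd {Prim}. Arguments AOr {Prim}.
Arguments AStar {Prim}. Arguments AEx {Prim}. Arguments AAll {Prim}.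

Definition env := nat -> Z.

Definition upd (eta : env) (x : nat) (z : Z) : env :=
  fun y => if Nat.eqb y x then z else eta y.

Fixpoint sem {Prim : Type} (psem : Prim -> env -> Heap -> Prop) (n : nat)
  (eta : env) (rho : nat -> HeapN n -> Prop) (A : assertion Prim)
  : HeapN n -> Prop :=
  match A with
  | APrim p => DeltaN n (psem p eta)
  | AVar a => rho a
  | ATrue => fun _ => True
  | AFalse => fun _ => False
  | AAnd A1 A2 => fun t => sem psem n eta rho A1 t /\ sem psem n eta rho A2 t
  | AOr A1 A2 => fun t => sem psem n eta rho A1 t \/ sem psem n eta rho A2 t
  | AStar A1 A2 => starN (sem psem n eta rho A1) (sem psem n eta rho A2)
  | AEx x A1 => fun t => exists z : Z, sem psem n (upd eta x z) rho A1 t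
  | AAll x A1 => fun t => forall z : Z, sem psem n (upd eta x z) rho A1 t
  end.

Definition valid_n {Prim : Type} (psem : Prim -> env -> Heap -> Prop) (n : nat)
  (eta : env) (A C : assertion Prim) : Prop :=
  forall rho : nat -> HeapN n -> Prop, (forall a, upclosed (rho a)) ->
  forall t, sem psem n eta rho A t -> sem psem n eta rho C t.

(* unary meaning of an assertion free of assertion variables, at a heap
   (rho is irrelevant for such assertions; we use the empty relation) *)
Definition sem1 {Prim : Type} (psem : Prim -> env -> Heap -> Prop) (eta : env)
  (A : assertion Prim) (h : Heap) : Prop :=
  sem psem 1 eta (fun _ _ => False) A (fun _ => h).

Fixpoint avar_free {Prim : Type} (A : assertion Prim) : Prop :=
  match A with
  | APrim _ | ATrue | AFalse => True
  | AVar _ => False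
  | AAnd A1 A2 | AOr A1 A2 | AStar A1 A2 => avar_free A1 /\ avar_free A2
  | AEx _ A1 | AAll _ A1 => avar_free A1
  end.

(* A conjunct/disjunct is a pair (phi, [a_1; ...; a_m]) denoting
   phi * a_1 * ... * a_m  (left-associated). *)
Definition star_vars {Prim : Type} (phi : assertion Prim) (l : list nat)
  : assertion Prim :=
  fold_left (fun acc a => AStar acc (AVar a)) l phi.

Fixpoint big_and {Prim : Type} (l : list (assertion Prim)) : assertion Prim :=
  match l with
  | [] => ATrue
  | [x] => x
  | x :: xs => AAnd x (big_and xs)
  end.

Fixpoint big_or {Prim : Type} (l : list (assertion Prim)) : assertion Prim :=
  match l with
  | [] => AFalse
  | [x] => x
  | x :: xs => AOr x (big_or xs)
  end.

Definition canon_lhs {Prim : Type} (lhs : list (assertion Prim * list nat)) :=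
  big_and (map (fun p => star_vars (fst p) (snd p)) lhs).
Definition canon_rhs {Prim : Type} (rhs : list (assertion Prim * list nat)) :=
  big_or (map (fun p => star_vars (fst p) (snd p)) rhs).

Definition phi_ {Prim} (lhs : list (assertion Prim * list nat)) (i : nat) :=
  fst (nth i lhs (ATrue, [])).
Definition avars_ {Prim} (lhs : list (assertion Prim * list nat)) (i : nat) :=
  snd (nth i lhs (ATrue, [])).

(* well-formedness of canonical form (indices are 0-based) *)
Definition canonical {Prim : Type} (lhs rhs : list (assertion Prim * list nat))
  : Prop :=
  1 <= length lhs /\
  (forall i, i < length lhs -> avar_free (phi_ lhs i)) /\
  (forall j, j < length rhs -> avar_free (phi_ rhs j)) /\
  (forall j b, j < length rhs -> In b (avars_ rhs j) ->
     exists i k, i < length lhs /\ nth_error (avars_ lhs i) k = Some b).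

Definition inV {Prim} (lhs : list (assertion Prim * list nat)) (c : nat) : Prop :=
  exists i, i < length lhs /\ In c (avars_ lhs i).
Definition inVb {Prim} (lhs : list (assertion Prim * list nat)) (c : nat) : bool :=
  existsb (fun p => existsb (Nat.eqb c) (snd p)) lhs.

Definition Pi {Prim} (lhs : list (assertion Prim * list nat)) (i c : nat) : nat :=
  count_occ Nat.eq_dec (avars_ lhs i) c.
Definition Omega {Prim} (rhs : list (assertion Prim * list nat)) (j c : nat) : nat :=
  count_occ Nat.eq_dec (avars_ rhs j) c.

Definition PiGeOmega {Prim} (lhs rhs : list (assertion Prim * list nat)) (i j : nat)
  : Prop := forall c, inV lhs c -> Omega rhs j c <= Pi lhs i c.

(* Σ_{c ∈ S} of the multiplicity function of the list l, S a decidable set: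
   Σ_{c∈S} count_occ l c = number of entries of l lying in S *)
Definition sum_mult (S : nat -> bool) (l : list nat) : nat :=
  length (filter S l).

Definition parametricity {Prim : Type} (psem : Prim -> env -> Heap -> Prop)
  (lhs rhs : list (assertion Prim * list nat)) (eta : env) : Prop :=
  forall (h : Heap) (hs : nat -> Heap),
    (forall i, i < length lhs -> hext (hs i) h /\ sem1 psem eta (phi_ lhs i) (hs i)) ->
    (exists i j, i < length lhs /\ j < length rhs /\
        sem1 psem eta (phi_ rhs j) (hs i) /\ PiGeOmega lhs rhs i j)
    \/
    (exists j, j < length rhs /\ avars_ rhs j = [] /\ sem1 psem eta (phi_ rhs j) h).

From Stdlib Require Import ZArith List PArith Arith Lia Classical.
Import ListNotations.

(* Fix a heap h and sub-heaps h_i ⊑ h with h_i ∈ [[φ_i]].  We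
   build one unary interpretation ρ of the assertion variables, the
   "witness interpretation": a variable outside B denotes every heap, and a
   variable c ∈ B denotes the heaps extending h \ h_i for some conjunct i in
   which c occurs.  By (B1) each conjunct φ_i * a_{i,1} * ... contains at most
   one variable of B, so h splits as h_i · (h \ h_i) and satisfies it; hence h
   satisfies the left-hand side, and by unary validity some disjunct j.  By
   (B2) either disjunct j carries no variable at all (second alternative of
   the Parametricity Condition), or exactly one variable c ∈ B.  In the latter
   case the part of h satisfying ψ_j is disjoint from an extension of h \ h_i,
   hence lies inside h_i, so h_i ∈ [[ψ_j]]; and (B3) together with the
   uniqueness of c forces Π(i) ≥ Ω(j) (first alternative). *)

Definition hemp : Heap :=
  mkHeap (fun _ => None) (ex_intro _ [] (fun x H => False_ind _ (H eq_refl))).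

Definition hdiff (h f : Heap) : Heap.
Proof.
  refine (mkHeap (fun x => match f x with Some _ => None | None => h x end) _).
  destruct (hfin h) as [l Hl]. exists l. intros x Hx. apply Hl.
  destruct (f x); congruence.
Defined.

Lemma hext_none (f g : Heap) x : hext f g -> g x = None -> f x = None.
Proof. intros H Hg. destruct (f x) eqn:E; auto. apply H in E. congruence. Qed.

Lemma hunion_hemp_r (f : Heap) : hunion f hemp f.
Proof. split; intros x; [right; reflexivity | simpl; destruct (f x); auto]. Qed.

Lemma hunion_hdiff (f h : Heap) : hext f h -> hunion f (hdiff h f) h.
Proof.
  intros H; split; intros x; simpl; destruct (f x) eqn:E; auto.
Qed.

(* If g ⊑ h is disjoint from an extension d of h \ f, then g ⊑ f: this is how
   the part of h satisfying ψ_j is located inside h_i. *)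
Lemma hext_disjoint_from_diff (f g h d : Heap) :
  hext f h -> hext g h -> hext (hdiff h f) d -> hdisj g d -> hext g f.
Proof.
  intros Hf Hg Hd Hdisj x v Hx.
  pose proof (Hg x v Hx) as Hh.
  destruct (f x) as [w|] eqn:E.
  - apply Hf in E. congruence.
  - assert (Hdx : d x = Some v) by (apply Hd; simpl; rewrite E; exact Hh).
    destruct (Hdisj x); congruence.
Qed.

Section Semantics.
Variable Prim : Type.
Variable psem : Prim -> env -> Heap -> Prop.

Lemma sem_upclosed n rho (Hrho : forall a, upclosed (rho a)) (A : assertion Prim) :
  forall eta t t', hextN t t' -> sem psem n eta rho A t -> sem psem n eta rho A t'.
Proof.
  induction A; intros eta t t' Ht H; simpl in *.
  - destruct H as [f [Hf Hk]]; exists f; split; auto.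
    intros k x v Hx; apply (Ht k), (Hk k), Hx.
  - eapply Hrho; eauto.
  - auto.
  - auto.
  - destruct H; split; eauto.
  - destruct H; [left | right]; eauto.
  - destruct H as [f [g [Hf [Hg Hu]]]].
    exists f, (fun k => hdiff (t' k) (f k)). split; [auto | split].
    + apply (IHA2 eta g); [| auto]. intros k x v Hx; simpl.
      destruct (Hu k) as [Hd He].
      destruct (f k x) eqn:E.
      * destruct (Hd x); congruence.
      * apply Ht. rewrite He, E. auto.
    + intros k; apply hunion_hdiff. intros x v Hx.
      apply Ht. destruct (Hu k) as [_ He]. rewrite He, Hx. auto.
  - destruct H as [z Hz]; exists z; eauto.
  - intros z; eauto.
Qed.

Lemma sem_avar_free n rho rho' (A : assertion Prim) :
  avar_free A -> forall eta t, sem psem n eta rho A t -> sem psem n eta rho' A t.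
Proof.
  induction A; simpl; intros Hf eta t H; try tauto.
  - destruct Hf; destruct H; split; eauto.
  - destruct Hf; destruct H; [left | right]; eauto.
  - destruct Hf. destruct H as [f [g [? [? ?]]]]; exists f, g; eauto.
  - destruct H as [z Hz]; exists z; eauto.
  - intros z; eauto.
Qed.

Lemma star_vars_cons (phi : assertion Prim) a l :
  star_vars phi (a :: l) = star_vars (AStar phi (AVar a)) l.
Proof. reflexivity. Qed.

Lemma star_vars_elim n eta rho l : forall (phi : assertion Prim) t,
  sem psem n eta rho (star_vars phi l) t ->
  exists gp, sem psem n eta rho phi gp /\ hextN gp t /\
    forall a, In a l -> exists ga, rho a ga /\ hextN ga t /\
      forall k, hdisj (gp k) (ga k).
Proof.
  induction l as [|a l IH]; intros phi t H.
  - exists t; split; auto; split; [intros k x v; auto | intros a []].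
  - rewrite star_vars_cons in H. destruct (IH _ _ H) as [g0 [Hg0 [Hext Hv]]].
    destruct Hg0 as [f [g [Hf [Hg Hu]]]].
    assert (Hfg0 : hextN f g0).
    { intros k x v Hx. destruct (Hu k) as [_ He]. rewrite He, Hx; auto. }
    exists f; split; auto; split.
    + intros k x v Hx. apply Hext, Hfg0, Hx.
    + intros a' [<- | Hin].
      * exists g; split; auto; split.
        -- intros k x v Hx. apply Hext. destruct (Hu k) as [Hd He].
           rewrite He. destruct (Hd x) as [E | E]; rewrite ?E; congruence.
        -- intros k; apply (Hu k).
      * destruct (Hv a' Hin) as [ga [H1 [H2 H3]]].
        exists ga; split; auto; split; auto.
        intros k x. destruct (H3 k x) as [E | E]; [left | right; exact E].
        eapply hext_none; [apply Hfg0 | exact E].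
Qed.

Lemma star_var_trivial n eta rho (phi : assertion Prim) a t :
  (forall t', rho a t') -> sem psem n eta rho phi t ->
  sem psem n eta rho (AStar phi (AVar a)) t.
Proof.
  intros Ha H. exists t, (fun _ => hemp).
  split; [exact H | split; [apply Ha | intros k; apply hunion_hemp_r]].
Qed.

Lemma star_vars_intro_trivial n eta rho l :
  (forall a, In a l -> forall t, rho a t) -> forall (phi : assertion Prim) t,
  sem psem n eta rho phi t -> sem psem n eta rho (star_vars phi l) t.
Proof.
  induction l as [|a l IH]; intros Hl phi t H; auto.
  rewrite star_vars_cons. apply IH; [intros b Hb; apply Hl; simpl; auto |].
  apply star_var_trivial; auto. apply Hl; simpl; auto.
Qed.

Lemma star_vars_intro_single n eta rho (B : nat -> bool)
  (HT : forall a, B a = false -> forall t, rho a t) l c :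
  filter B l = [c] -> forall (phi : assertion Prim) f g t,
  sem psem n eta rho phi f -> rho c g -> (forall k, hunion (f k) (g k) (t k)) ->
  sem psem n eta rho (star_vars phi l) t.
Proof.
  induction l as [|a l IH]; intros Hf phi f g t H Hg Hu; [discriminate |].
  simpl in Hf. rewrite star_vars_cons. destruct (B a) eqn:E.
  - injection Hf as -> Hnil. apply star_vars_intro_trivial.
    + intros b Hb. apply HT. destruct (B b) eqn:Eb; auto.
      assert (Hin : In b (filter B l)) by (apply filter_In; auto).
      rewrite Hnil in Hin; destruct Hin.
    + exists f, g; auto.
  - eapply IH; eauto. apply star_var_trivial; auto.
Qed.

Lemma canon_lhs_intro n eta rho (lhs : list (assertion Prim * list nat)) t :
  (forall i, i < length lhs ->
     sem psem n eta rho (star_vars (phi_ lhs i) (avars_ lhs i)) t) ->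
  sem psem n eta rho (canon_lhs lhs) t.
Proof.
  intros Hall. unfold canon_lhs.
  assert (Hin : forall x, In x (map (fun p => star_vars (fst p) (snd p)) lhs) ->
                  sem psem n eta rho x t).
  { intros x Hx. apply in_map_iff in Hx as [p [<- Hp]].
    apply In_nth with (d := (ATrue, [])) in Hp as [i [Hi <-]].
    exact (Hall i Hi). }
  induction (map _ lhs) as [|x l IH]; [exact I |].
  destruct l as [|y l]; [apply Hin; simpl; auto |].
  split; [apply Hin; simpl; auto |].
  apply IH. intros z Hz. apply Hin. simpl in *. tauto.
Qed.

Lemma canon_rhs_elim n eta rho (rhs : list (assertion Prim * list nat)) t :
  sem psem n eta rho (canon_rhs rhs) t ->
  exists j, j < length rhs /\
    sem psem n eta rho (star_vars (phi_ rhs j) (avars_ rhs j)) t.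
Proof.
  unfold canon_rhs. intros H.
  assert (Hex : exists x, In x (map (fun p => star_vars (fst p) (snd p)) rhs) /\
                  sem psem n eta rho x t).
  { induction (map _ rhs) as [|x l IH]; [destruct H |].
    destruct l as [|y l]; [exists x; simpl; auto |].
    destruct H as [H | H]; [exists x; simpl; auto |].
    destruct (IH H) as [z [Hz Hs]]; exists z; simpl in *; auto. }
  destruct Hex as [x [Hx Hs]].
  apply in_map_iff in Hx as [p [<- Hp]].
  apply In_nth with (d := (ATrue, [])) in Hp as [j [Hj Hnth]].
  exists j; split; auto. rewrite <- Hnth in Hs. exact Hs.
Qed.

End Semantics.

Lemma count_le_filter (B : nat -> bool) c l :
  B c = true -> count_occ Nat.eq_dec l c <= length (filter B l).
Proof.
  intros Hc; induction l as [|a l IH]; simpl; auto.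
  destruct (Nat.eq_dec a c) as [-> |]; [rewrite Hc; simpl; lia |].
  destruct (B a); simpl; lia.
Qed.

Lemma count_le_of_single_filter (B : nat -> bool) l1 l2 c :
  filter B l2 = [c] -> In c l1 -> forall c', B c' = true ->
  count_occ Nat.eq_dec l2 c' <= count_occ Nat.eq_dec l1 c'.
Proof.
  intros Hf Hc1 c' Hc'.
  destruct (count_occ Nat.eq_dec l2 c') eqn:E; [lia |].
  assert (Hin : In c' (filter B l2)).
  { apply filter_In; split; auto. apply (count_occ_In Nat.eq_dec). lia. }
  rewrite Hf in Hin. destruct Hin as [<- | []].
  pose proof (count_le_filter B c l2 Hc') as Hle. rewrite Hf in Hle; simpl in Hle.
  apply (count_occ_In Nat.eq_dec) in Hc1. lia.
Qed.

Lemma nil_of_filter_all (f : nat -> bool) l :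
  (forall x, In x l -> f x = true) -> length (filter f l) = 0 -> l = [].
Proof.
  intros Hall H0. rewrite forallb_filter_id in H0; [| apply forallb_forall; auto].
  destruct l; [reflexivity | discriminate].
Qed.

Lemma canonical_rhs_vars_inVb {Prim} (lhs rhs : list (assertion Prim * list nat)) j b :
  canonical lhs rhs -> j < length rhs -> In b (avars_ rhs j) -> inVb lhs b = true.
Proof.
  intros [_ [_ [_ Hcan]]] Hj Hb. destruct (Hcan j b Hj Hb) as [i [k [Hi Hk]]].
  apply existsb_exists. exists (nth i lhs (ATrue, [])).
  split; [apply nth_In; auto |].
  apply existsb_exists; exists b; split; [eapply nth_error_In; eauto | apply Nat.eqb_refl].
Qed.

Section Witness.
Variable Prim : Type.
Variable psem : Prim -> env -> Heap -> Prop.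
Variable eta : env.
Variable lhs : list (assertion Prim * list nat).
Variable B : nat -> bool.
Variable h : Heap.
Variable hs : nat -> Heap.
Hypothesis Hhs : forall i, i < length lhs ->
  hext (hs i) h /\ sem1 psem eta (phi_ lhs i) (hs i).

Definition witness (a : nat) (t : HeapN 1) : Prop :=
  if B a then exists i, i < length lhs /\ In a (avars_ lhs i) /\
                forall k, hext (hdiff h (hs i)) (t k)
  else True.

Lemma witness_upclosed : forall a, upclosed (witness a).
Proof.
  unfold upclosed, witness; intros a t t' Ht; destruct (B a); auto.
  intros [i [Hi [Hin Hk]]]; exists i; repeat split; auto.
  intros k x v Hx; apply (Ht k), (Hk k), Hx.
Qed.

Lemma witness_off_B : forall a, B a = false -> forall t, witness a t.
Proof. unfold witness; intros a Ha t; rewrite Ha; exact I. Qed.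

Lemma witness_lhs :
  (forall i, i < length lhs -> avar_free (phi_ lhs i)) ->
  (forall i, i < length lhs -> sum_mult B (avars_ lhs i) <= 1) ->
  sem psem 1 eta witness (canon_lhs lhs) (fun _ => h).
Proof.
  intros Hphil HB1. apply canon_lhs_intro. intros i Hi.
  destruct (Hhs i Hi) as [Hext Hsem].
  assert (Hphi : sem psem 1 eta witness (phi_ lhs i) (fun _ => hs i))
    by (eapply sem_avar_free; [apply Hphil; auto | exact Hsem]).
  pose proof (HB1 i Hi) as H1; unfold sum_mult in H1.
  destruct (filter B (avars_ lhs i)) as [|c [|c' r]] eqn:Ef; simpl in H1; [| | lia].
  - apply sem_upclosed with (t := fun _ => hs i);
      [apply witness_upclosed | intros k; exact Hext |].
    apply star_vars_intro_trivial; auto.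
    intros a Ha. apply witness_off_B. destruct (B a) eqn:Eb; auto.
    assert (Hin : In a (filter B (avars_ lhs i))) by (apply filter_In; auto).
    rewrite Ef in Hin; destruct Hin.
  - assert (Hc : In c (filter B (avars_ lhs i))) by (rewrite Ef; simpl; auto).
    apply filter_In in Hc as [Hc1 Hc2].
    eapply star_vars_intro_single with (c := c) (f := fun _ => hs i)
      (g := fun _ => hdiff h (hs i)); eauto using witness_off_B.
    + unfold witness; rewrite Hc2. exists i; repeat split; auto.
      intros k x v; auto.
    + intros k; apply hunion_hdiff; auto.
Qed.

Lemma witness_disjunct (phi : assertion Prim) l c :
  avar_free phi -> In c l -> B c = true ->
  sem psem 1 eta witness (star_vars phi l) (fun _ => h) ->
  exists i, i < length lhs /\ In c (avars_ lhs i) /\ sem1 psem eta phi (hs i).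
Proof.
  intros Hphi Hc HBc Hs.
  destruct (star_vars_elim _ _ _ _ _ _ _ _ Hs) as [gp [Hgp [Hgext Hv]]].
  destruct (Hv c Hc) as [gc [Hrc [Hgc Hdisj]]].
  unfold witness in Hrc; rewrite HBc in Hrc. destruct Hrc as [i [Hi [Hinc HDi]]].
  exists i; repeat split; auto.
  eapply sem_avar_free; [exact Hphi |].
  apply sem_upclosed with (t := gp); [apply witness_upclosed | | exact Hgp].
  intros k. apply hext_disjoint_from_diff with (h := h) (d := gc k);
    [apply Hhs; auto | apply Hgext | apply HDi | apply Hdisj].
Qed.

End Witness.

Theorem mainTheorem6 (Prim : Type) (psem : Prim -> env -> Heap -> Prop)
  (lhs rhs : list (assertion Prim * list nat)) (eta : env) (B : nat -> bool) :
  canonical lhs rhs ->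
  (forall c, B c = true -> inV lhs c) ->
  (forall i, i < length lhs -> sum_mult B (avars_ lhs i) <= 1) ->
  (forall j, j < length rhs ->
     sum_mult (inVb lhs) (avars_ rhs j) = 0 \/ sum_mult B (avars_ rhs j) = 1) ->
  (forall i j, i < length lhs -> j < length rhs -> ~ PiGeOmega lhs rhs i j ->
     exists c, B c = true /\ Pi lhs i c < Omega rhs j c) ->
  valid_n psem 1 eta (canon_lhs lhs) (canon_rhs rhs) ->
  parametricity psem lhs rhs eta.
Proof.
  intros Hcanon _ HB1 HB2 HB3 Hvalid h hs Hhs.
  pose proof Hcanon as [_ [Hphil [Hphir _]]].
  pose proof (Hvalid _ (witness_upclosed _ _ _ _ _) _
                (witness_lhs _ _ _ _ _ _ _ Hhs Hphil HB1)) as Hrhs.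
  destruct (canon_rhs_elim _ _ _ _ _ _ _ Hrhs) as [j [Hj Hsat]].
  destruct (HB2 j Hj) as [Hnone | Hone].
  -
    right. exists j.
    assert (Hnil : avars_ rhs j = [])
      by (eapply nil_of_filter_all; [intros b; eapply canonical_rhs_vars_inVb |]; eauto).
    rewrite Hnil in Hsat.
    repeat split; auto. eapply sem_avar_free; [apply Hphir; auto | exact Hsat].
  -
    left. unfold sum_mult in Hone.
    destruct (filter B (avars_ rhs j)) as [|c [|c' r]] eqn:Ef; try discriminate.
    assert (Hc : In c (filter B (avars_ rhs j))) by (rewrite Ef; simpl; auto).
    apply filter_In in Hc as [Hc HBc].
    destruct (witness_disjunct _ _ _ _ _ _ _ Hhs _ _ c (Hphir j Hj) Hc HBc Hsat)
      as [i [Hi [Hci Hsem]]].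
    exists i, j. repeat split; auto.
    apply NNPP; intros Hn. destruct (HB3 i j Hi Hj Hn) as [c' [HBc' Hlt]].
    pose proof (count_le_of_single_filter B _ _ c Ef Hci c' HBc').
    unfold Pi, Omega in Hlt. lia.
Qed.
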